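(* Let $p>1$ be an integer and let $u^{(p)}$ be the fixed point of the substitution $\varphi_p(L)=L^pS$, $\varphi_p(S)=M$, $\varphi_p(M)=L^{p-1}S$. Let $v,w$ be factors of $u^{(p)}$ with $|v|=|w|$. Then $\left||v|_L-|w|_L\right|\le 3$.
   Context: $u^{(p)}=\lim_{n\to\infty}\varphi_p^n(L)$ is the unique infinite word over $\{L,S,M\}$ fixed by $\varphi_p$. A factor is a finite contiguous subword; $|w|$ is the length and $|w|_a$ the number of occurrences of the letter $a$ in $w$. *)

From HB Require Import structures.
From mathcomp Require Import all_boot.
Set Implicit Arguments. Unset Strict Implicit. Unset Printing Implicit Defensive.

Inductive letter := L | S | M.

Definition letter_eqb (a b : letter) : bool :=
  match a, b with L, L | S, S | M, M => true | _, _ => false end.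
Lemma letter_eqbP : Equality.axiom letter_eqb.
Proof. by case; case; constructor. Qed.
HB.instance Definition _ := hasDecEq.Build letter letter_eqbP.

Definition phi (p : nat) (a : letter) : seq letter :=
  match a with
  | L => rcons (nseq p L) S
  | S => [:: M]
  | M => rcons (nseq p.-1 L) S
  end.

Definition phi_word (p : nat) (w : seq letter) : seq letter :=
  flatten (map (phi p) w).

Definition phi_iter (p n : nat) : seq letter := iter n (phi_word p) [:: L].

Definition is_fixed_point_limit (p : nat) (u : nat -> letter) : Prop :=
  forall n i, i < size (phi_iter p n) -> u i = nth L (phi_iter p n) i.

Definition factor (u : nat -> letter) (i n : nat) : seq letter :=
  mkseq (fun k => u (i + k)) n.

Definition occ (a : letter) (w : seq letter) : nat := count_mem a w.

(* Write [ΔL], [ΔS], [ΔM] for the differences of the letter counts of two factors [u[a, b)]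
   and [u[c, d)] of [u = phi_p(u)].  Each of the four end positions lies in the image of a
   letter of [u] (its parent), and the [Δ]'s transform like the incidence matrix of [phi_p]:
   [ΔS = ΔL' + ΔM'], [ΔM = ΔS'] and [ΔL = p ΔL' + (p - 1) ΔM' + (offsets)], where the primed
   quantities belong to the parent factors.  The letters at the four ends are determined by
   the parents' letters and by whether each position ends its block.  Replacing the offsets
   by their ranges, which are affine in [p], gives a finite transition system on tuples
   ([ΔL], [ΔS], [ΔM], four end letters) with length difference in [[-5, 5]].  Its reachable
   part is computed by evaluation, separately for [p = 2] and for [p >= 3], and every
   reachable state with length difference [0] has [|ΔL| <= 3].  Parent pairs whose length
   difference leaves [[-5, 5]] cannot occur: moving their ends to length difference [±5]
   gives reachable states, and these bound the length difference of the images too tightly. *)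

From Stdlib Require Import ZArith MSetPositive.
From mathcomp Require Import all_boot zify ssrZ.

Set Implicit Arguments.
Unset Strict Implicit.
Unset Printing Implicit Defensive.

Definition block_len (p : nat) (c : letter) : nat :=
  match c with L => p.+1 | S => 1 | M => p end.

Definition last_letter (c : letter) : letter := match c with S => M | _ => S end.

Fixpoint pcount (u : nat -> letter) (a : letter) (i : nat) : nat :=
  if i is i'.+1 then pcount u a i' + (u i' == a) else 0.

(* [block_start p u k] is the position where the image of [u k] starts in [phi_p(u) = u]. *)
Fixpoint block_start (p : nat) (u : nat -> letter) (k : nat) : nat :=
  if k is k'.+1 then block_start p u k' + block_len p (u k') else 0.

(* [desubst p u i = (k, r)]: position [i] is the [r]-th letter of the image of [u k]. *)
Fixpoint desubst (p : nat) (u : nat -> letter) (i : nat) : nat * nat :=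
  if i is i'.+1 then
    let kr := desubst p u i' in
    if kr.2.+1 < block_len p (u kr.1) then (kr.1, kr.2.+1) else (kr.1.+1, 0)
  else (0, 0).

Definition parent (p : nat) (u : nat -> letter) (i : nat) : nat := (desubst p u i).1.
Definition offset (p : nat) (u : nat -> letter) (i : nat) : nat := (desubst p u i).2.

Definition at_block_end (p : nat) (u : nat -> letter) (i : nat) : bool :=
  block_len p (u (parent p u i)) <= (offset p u i).+1.

Lemma pcount_sum u i : pcount u L i + pcount u S i + pcount u M i = i.
Proof. by elim: i => //= i IH; case: (u i) => /=; lia. Qed.

Lemma block_start_counts p u k :
  block_start p u k = p.+1 * pcount u L k + pcount u S k + p * pcount u M k.
Proof. by elim: k => [|k IH] /=; [lia | rewrite IH; case: (u k) => /=; lia]. Qed.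

Definition zcount (u : nat -> letter) (a : letter) (i : nat) : Z := Z.of_nat (pcount u a i).
Definition zstart (p : nat) (u : nat -> letter) (k : nat) : Z := Z.of_nat (block_start p u k).
Definition zoffset (p : nat) (u : nat -> letter) (i : nat) : Z := Z.of_nat (offset p u i).

(* For a statistic [f] of prefixes: [f] of [u[a, b)] minus [f] of [u[c, d)]. *)
Definition ddiff (f : nat -> Z) (a b c d : nat) : Z := (f b - f a - (f d - f c))%Z.

Lemma ddiff_len_counts u a b c d :
  ddiff Z.of_nat a b c d
  = (ddiff (zcount u L) a b c d + ddiff (zcount u S) a b c d + ddiff (zcount u M) a b c d)%Z.
Proof.
have := pcount_sum u a; have := pcount_sum u b; have := pcount_sum u c; have := pcount_sum u d.
rewrite /ddiff /zcount; lia.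
Qed.

Lemma ddiff_block_start p u a b c d :
  ddiff (zstart p u) a b c d
  = (Z.of_nat p * (ddiff (zcount u L) a b c d + ddiff (zcount u M) a b c d)
     + ddiff (zcount u L) a b c d + ddiff (zcount u S) a b c d)%Z.
Proof.
rewrite /ddiff /zcount /zstart !block_start_counts; lia.
Qed.

Section Substitution.

Variable p : nat.
Hypothesis p_gt0 : 0 < p.

Lemma block_len_gt0 c : 0 < block_len p c.
Proof. by case: c => /=. Qed.

Lemma size_phi c : size (phi p c) = block_len p c.
Proof. by case: c => /=; rewrite ?size_rcons ?size_nseq // prednK. Qed.

Lemma nth_phi c r : r < block_len p c ->
  nth L (phi p c) r = if r.+1 < block_len p c then L else last_letter c.
Proof.
case: c => /= hr; [| by case: r hr |];
  rewrite nth_rcons size_nseq nth_nseq; case: ltnP => h.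
- by rewrite ltnS h.
- have -> : r = p by lia.
  by rewrite eqxx ltnn.
- by have -> : r.+1 < p by lia.
- have -> : r = p.-1 by lia.
  by rewrite eqxx prednK // ltnn.
Qed.

Lemma phi_word_cons a w : phi_word p (a :: w) = phi p a ++ phi_word p w.
Proof. by []. Qed.

Lemma size_phi_word w : size (phi_word p w) = sumn (map (block_len p) w).
Proof. by elim: w => //= a w IH; rewrite phi_word_cons size_cat IH size_phi. Qed.

Lemma nth_phi_word w t r : t < size w -> r < block_len p (nth L w t) ->
  nth L (phi_word p w) (sumn (map (block_len p) (take t w)) + r)
  = nth L (phi p (nth L w t)) r.
Proof.
elim: w t => [|a w IH] [|t] //= ht hr; rewrite phi_word_cons nth_cat size_phi.
  by rewrite hr.
by rewrite ifN -?IH //; [congr nth | ]; lia.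
Qed.

Lemma phi_iter_consL n : exists w, phi_iter p n = L :: w.
Proof.
elim: n => [|n [w IH]]; first by exists [::].
rewrite /phi_iter iterS -/(phi_iter p n) IH phi_word_cons /=.
by case: p p_gt0 => // p' _; eexists.
Qed.

Lemma size_phi_iter n : n < size (phi_iter p n).
Proof.
elim: n => // n IH; rewrite /phi_iter iterS -/(phi_iter p n).
have [w E] := phi_iter_consL n.
rewrite E size_phi_word /=; rewrite E /= in IH.
have : size w <= sumn (map (block_len p) w).
  by elim: w {E IH} => //= a w IHw; have := block_len_gt0 a; lia.
lia.
Qed.

Variable u : nat -> letter.
Hypothesis u_fixed : is_fixed_point_limit p u.

Lemma fixed_point_head : u 0 = L.
Proof. by rewrite (@u_fixed 0 0). Qed.

(* Compare [u] on the prefix [phi^(k+1)(L)] and on its image [phi^(k+2)(L)]. *)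
Lemma fixed_point_block k r : r < block_len p (u k) ->
  u (block_start p u k + r) = nth L (phi p (u k)) r.
Proof.
move=> hr; set w := phi_iter p k.+1.
have hk : k < size w by have := size_phi_iter k.+1; rewrite -/w; lia.
have hw t : t < size w -> u t = nth L w t by exact: u_fixed.
have hB t : t <= size w -> block_start p u t = sumn (map (block_len p) (take t w)).
  elim: t => [|t IH] ht; first by rewrite take0.
  rewrite /= IH 1?(take_nth L) -1?cats1 ?map_cat ?sumn_cat /= ?addn0 ?hw //; lia.
have hsplit : sumn (map (block_len p) (take k.+1 w))
    = sumn (map (block_len p) (take k w)) + block_len p (u k).
  by rewrite (take_nth L) // -cats1 map_cat sumn_cat /= addn0 hw.
have hlt : sumn (map (block_len p) (take k w)) + r < size (phi_iter p k.+2).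
  rewrite /phi_iter iterS -/(phi_iter p k.+1) -/w size_phi_word.
  rewrite -{2}(cat_take_drop k.+1 w) map_cat sumn_cat hsplit; lia.
rewrite hB; last lia.
rewrite (u_fixed hlt).
by rewrite /phi_iter iterS -/(phi_iter p k.+1) -/w nth_phi_word // -hw.
Qed.

Lemma desubst_spec i : let: (k, r) := desubst p u i in
  i = block_start p u k + r /\ r < block_len p (u k).
Proof.
elim: i => [|i] /=; first by rewrite block_len_gt0.
case: (desubst p u i) => k r [-> hr] /=; case: ifP => h /=; split; try lia.
exact: block_len_gt0.
Qed.

Lemma letter_desubst i :
  u i = if at_block_end p u i then last_letter (u (parent p u i)) else L.
Proof.
rewrite /at_block_end /parent /offset; have := desubst_spec i.
case: (desubst p u i) => k r /= [Ei hr].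
rewrite {1}Ei fixed_point_block // nth_phi // ltnNge.
by case: (_ <= _).
Qed.

Lemma block_start_ge k : 0 < k -> k + p <= block_start p u k.
Proof.
elim: k => [|k IH] // _; rewrite /=.
case: k IH => [|k] IH; first by rewrite fixed_point_head /=.
by have := IH erefl; have := block_len_gt0 (u k.+1); lia.
Qed.

Lemma parent_lt i : 0 < i -> parent p u i < i.
Proof.
rewrite /parent.
have := desubst_spec i; case: (desubst p u i) => [[|k] r] /= [-> _] // _.
by have /= := @block_start_ge k.+1 isT; lia.
Qed.

Lemma parent_le i : parent p u i <= i.
Proof. by case: i => // i; have := @parent_lt i.+1; lia. Qed.

Lemma block_start_mono j k : j <= k -> block_start p u j + (k - j) <= block_start p u k.
Proof.
move=> /subnK <-; elim: (k - j) => [|n IH] /=; first by rewrite add0n subnn addn0.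
by have := block_len_gt0 (u (n + j)); lia.
Qed.

Lemma offset_lt i : offset p u i < block_len p (u (parent p u i)).
Proof. by have := desubst_spec i; rewrite /parent /offset; case: desubst => ? ? []. Qed.

Lemma parents_sum_lt a b c d : 0 < a + b + c + d ->
  parent p u a + parent p u b + parent p u c + parent p u d < a + b + c + d.
Proof.
move=> hpos; have := parent_le a; have := parent_le b; have := parent_le c.
have := parent_le d.
case: (posnP a) => [?|/parent_lt ?]; case: (posnP b) => [?|/parent_lt ?];
  case: (posnP c) => [?|/parent_lt ?]; case: (posnP d) => [?|/parent_lt ?]; lia.
Qed.

Lemma pcount_desubst i : let k := parent p u i in
  [/\ pcount u L i = p * pcount u L k + p.-1 * pcount u M k + offset p u i,
      pcount u S i = pcount u L k + pcount u M k &
      pcount u M i = pcount u S k].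
Proof.
rewrite /parent /offset; elim: i => [|i [IHL IHS IHM]] /=; first by rewrite !muln0.
have := desubst_spec i; have := letter_desubst i.
rewrite /at_block_end /parent /offset IHL IHS IHM.
case: (desubst p u i) => k r /= -> [_ hr]; case: leqP => h /=.
- by move: hr h; case: (u k) => /= hr h; split; lia.
- by split; lia.
Qed.

Let k := parent p u.

Lemma ddiff_counts_desubst a b c d :
  [/\ ddiff (zcount u L) a b c d
      = (Z.of_nat p * ddiff (zcount u L) (k a) (k b) (k c) (k d)
         + (Z.of_nat p - 1) * ddiff (zcount u M) (k a) (k b) (k c) (k d)
         + ddiff (zoffset p u) a b c d)%Z,
      ddiff (zcount u S) a b c d
      = (ddiff (zcount u L) (k a) (k b) (k c) (k d) + ddiff (zcount u M) (k a) (k b) (k c) (k d))%Z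
    & ddiff (zcount u M) a b c d = ddiff (zcount u S) (k a) (k b) (k c) (k d)].
Proof.
have [a1 a2 a3] := pcount_desubst a.
have [b1 b2 b3] := pcount_desubst b.
have [c1 c2 c3] := pcount_desubst c.
have [d1 d2 d3] := pcount_desubst d.
rewrite /ddiff /zcount /zoffset /k; split; nia.
Qed.

Lemma ddiff_len_desubst a b c d :
  ddiff Z.of_nat a b c d
  = (ddiff (zstart p u) (k a) (k b) (k c) (k d)
     + ddiff (zoffset p u) a b c d)%Z.
Proof.
have spec i : i = block_start p u (k i) + offset p u i.
  by have := desubst_spec i; rewrite /k /parent /offset; case: desubst => ? ? [].
rewrite /ddiff /zoffset /zstart {1}(spec a) {1}(spec b) {1}(spec c) {1}(spec d); lia.
Qed.

End Substitution.

Definition lform := (Z * Z)%type.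

Definition lf_eval (f : lform) (p : Z) : Z := (f.1 * p + f.2)%Z.
Definition lf_add (f g : lform) : lform := (f.1 + g.1, f.2 + g.2)%Z.
Definition lf_sub (f g : lform) : lform := (f.1 - g.1, f.2 - g.2)%Z.
Definition lf_const (c : Z) : lform := (0, c)%Z.

Lemma lf_eval_add f g x : lf_eval (lf_add f g) x = (lf_eval f x + lf_eval g x)%Z.
Proof. rewrite /lf_eval /=; lia. Qed.

Lemma lf_eval_sub f g x : lf_eval (lf_sub f g) x = (lf_eval f x - lf_eval g x)%Z.
Proof. rewrite /lf_eval /=; lia. Qed.

Lemma lf_eval_const c x : lf_eval (lf_const c) x = c.
Proof. rewrite /lf_eval /=; lia. Qed.

Definition lf_evalE := (lf_eval_add, lf_eval_sub, lf_eval_const).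

Definition block_form (c : letter) : lform :=
  match c with L => (1, 1) | S => (0, 1) | M => (1, 0) end%Z.

Lemma lf_eval_block_form p c : lf_eval (block_form c) (Z.of_nat p) = Z.of_nat (block_len p c).
Proof. by rewrite /lf_eval; case: c; cbn [fst snd block_form block_len]; lia. Qed.

(* Affine constraints in [p] are decided exactly for [p = 2] and conservatively for [p >= 3]. *)
Inductive regime := Two | AtLeastThree.

Definition in_regime (rg : regime) (p : nat) : Prop :=
  if rg is Two then p = 2 else 3 <= p.

Definition regime_of (p : nat) : regime := if p == 2 then Two else AtLeastThree.

Lemma in_regime_of p : 1 < p -> in_regime (regime_of p) p.
Proof. by rewrite /regime_of; case: eqP => //= ? ?; lia. Qed.

Definition nonneg_on (rg : regime) (f : lform) : bool :=
  if rg is Two then (0 <=? lf_eval f 2)%Z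
  else (0 <=? f.1)%Z && (0 <=? lf_eval f 3)%Z.

(* A necessary condition for [f] and [h] to be simultaneously nonnegative at some [p] of the
   regime; for [p >= 3] it only rules out a negative constant, a decreasing form already
   negative at [3], and two forms of opposite slopes whose nonnegativity half-lines are
   disjoint. *)
Definition feasible (rg : regime) (f h : lform) : bool :=
  if rg is Two then (0 <=? lf_eval f 2)%Z && (0 <=? lf_eval h 2)%Z else
  let: (a1, b1) := f in let: (a2, b2) := h in
  [&& ~~ ((a1 =? 0) && (b1 <? 0)), ~~ ((a2 =? 0) && (b2 <? 0)),
      ~~ ((a1 <? 0) && (lf_eval f 3 <? 0)), ~~ ((a2 <? 0) && (lf_eval h 3 <? 0)),
      ~~ [&& 0 <? a1, a2 <? 0 & a1 * b2 - a2 * b1 <? 0] &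
      ~~ [&& a1 <? 0, 0 <? a2 & a2 * b1 - a1 * b2 <? 0]]%Z.

Lemma nonneg_onP rg f p : in_regime rg p -> nonneg_on rg f -> (0 <= lf_eval f (Z.of_nat p))%Z.
Proof.
case: rg => /= hp; first by move=> /Z.leb_le; rewrite hp.
case: f => a b /andP[/Z.leb_le ha /Z.leb_le hb].
move: ha hb; rewrite /lf_eval; cbn [fst snd] => ha hb; nia.
Qed.

Lemma feasible_witness rg f h p : in_regime rg p ->
  (0 <= lf_eval f (Z.of_nat p))%Z -> (0 <= lf_eval h (Z.of_nat p))%Z -> feasible rg f h.
Proof.
case: rg => /= hp; first by rewrite hp => /Z.leb_le -> /Z.leb_le ->.
case: f h => [a1 b1] [a2 b2]; rewrite /lf_eval; cbn [fst snd] => h1 h2.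
repeat (apply/andP; split); apply/negP.
- by move=> /andP[/Z.eqb_eq ? /Z.ltb_lt]; subst; lia.
- by move=> /andP[/Z.eqb_eq ? /Z.ltb_lt]; subst; lia.
- by move=> /andP[/Z.ltb_lt ? /Z.ltb_lt ?]; nia.
- by move=> /andP[/Z.ltb_lt ? /Z.ltb_lt ?]; nia.
- by move=> /and3P[/Z.ltb_lt ? /Z.ltb_lt ? /Z.ltb_lt ?]; nia.
- by move=> /and3P[/Z.ltb_lt ? /Z.ltb_lt ? /Z.ltb_lt ?]; nia.
Qed.

(* Bounds on the offset of a position inside the image of [c], according to whether it is the
   last position of that image ([None] when that is impossible), and the letter it carries. *)
Definition slot_range (last : bool) (c : letter) : option (lform * lform) :=
  let m := lf_sub (block_form c) (lf_const 1) in
  if last then Some (m, m)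
  else if c is S then None else Some (lf_const 0, lf_sub m (lf_const 1)).

Definition slot_letter (last : bool) (c : letter) : letter :=
  if last then last_letter c else L.

(* [(ΔL, ΔS, ΔM, u a, u b, u c, u d)] for a pair of factors [u[a, b)], [u[c, d)]. *)
Definition astate := (Z * Z * Z * letter * letter * letter * letter)%type.

Definition abstraction (u : nat -> letter) (a b c d : nat) : astate :=
  (ddiff (zcount u L) a b c d, ddiff (zcount u S) a b c d, ddiff (zcount u M) a b c d,
   u a, u b, u c, u d).

(* A move fixes, for each of the four positions, whether it ends its block, and the
   difference of lengths of the two factors. *)
Definition move := (bool * bool * (bool * bool) * Z)%type.

Definition flags := [:: false; true].
Definition flag_pairs := [seq (x, y) | x <- flags, y <- flags].
Definition len_diffs := [seq (Z.of_nat n - 5)%Z | n <- iota 0 11].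
Definition moves : seq move :=
  [seq (k, dd) | k <- [seq (ab, cd) | ab <- flag_pairs, cd <- flag_pairs], dd <- len_diffs].

Lemma mem_moves ka kb kc kd dd : (-5 <= dd <= 5)%Z -> (ka, kb, (kc, kd), dd) \in moves.
Proof.
move=> hdd; have flagsP x : x \in flags by case: x.
apply: allpairs_f; first by apply: allpairs_f; apply: allpairs_f.
apply/mapP; exists (Z.to_nat (dd + 5)); rewrite ?mem_iota; lia.
Qed.

(* The offsets must contribute [need], the length difference [dd] of the factors minus that
   of the images of their parents, and they contribute between [lo] and [hi].  The new [ΔL]
   is then forced by [ΔL + ΔS + ΔM = dd]. *)
Definition successor (rg : regime) (s : astate) (m : move) : option astate :=
  let: (dL, dS, dM, ca, cb, cc, cd) := s in
  let: (ka, kb, (kc, kd), dd) := m in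
  match slot_range ka ca, slot_range kb cb, slot_range kc cc, slot_range kd cd with
  | Some (loa, hia), Some (lob, hib), Some (loc, hic), Some (lod, hid) =>
    let lo := lf_sub (lf_add lob loc) (lf_add hia hid) in
    let hi := lf_sub (lf_add hib hic) (lf_add loa lod) in
    let need := lf_sub (lf_const dd) (dL + dM, dL + dS)%Z in
    if feasible rg (lf_sub need lo) (lf_sub hi need) then
      Some ((dd - (dL + dM) - dS)%Z, (dL + dM)%Z, dS,
            slot_letter ka ca, slot_letter kb cb, slot_letter kc cc, slot_letter kd cd)
    else None
  | _, _, _, _ => None
  end.

Definition successors (rg : regime) (s : astate) : seq astate := pmap (successor rg s) moves.

(* [G] evaluates at [p] to the length difference of the images of the two factors. *)
Definition overflow_ok (rg : regime) (s : astate) : bool :=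
  let: (dL, dS, dM, ca, cb, cc, cd) := s in
  let G := (dL + dM, dL + dS)%Z in
  ((dL + dS + dM != 5)%Z ||
     nonneg_on rg (lf_sub G (lf_add (lf_add (block_form ca) (block_form cd)) (lf_const 3))))
  && ((dL + dS + dM != -5)%Z ||
     nonneg_on rg (lf_sub (lf_const (-3)) (lf_add G (lf_add (block_form cb) (block_form cc))))).

Definition balanced (s : astate) : bool :=
  let: (dL, dS, dM, _, _, _, _) := s in
  (dL + dS + dM != 0)%Z || ((-3 <=? dL) && (dL <=? 3))%Z.

Definition initial : astate := (0, 0, 0, L, L, L, L)%Z.

Definition letter_code (c : letter) : Z := match c with L => 0 | S => 1 | M => 2 end%Z.
Definition letter_of_code (z : Z) : letter :=
  if (z =? 0)%Z then L else if (z =? 1)%Z then S else M.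

(* Injective as long as the [Δ]'s lie in [-32, 31]; [inX] does not rely on it, since it
   checks that the key decodes back to the state. *)
Definition encode (s : astate) : positive :=
  let: (dL, dS, dM, ca, cb, cc, cd) := s in
  Z.to_pos (1 + (((((((dL + 32) * 64 + (dS + 32)) * 64 + (dM + 32)) * 3
    + letter_code ca) * 3 + letter_code cb) * 3 + letter_code cc) * 3 + letter_code cd))%Z.

Definition decode (key : positive) : astate :=
  let z := (Zpos key - 1)%Z in
  let cd := (z mod 3)%Z in let z := (z / 3)%Z in
  let cc := (z mod 3)%Z in let z := (z / 3)%Z in
  let cb := (z mod 3)%Z in let z := (z / 3)%Z in
  let ca := (z mod 3)%Z in let z := (z / 3)%Z in
  let dM := (z mod 64)%Z in let z := (z / 64)%Z in
  let dS := (z mod 64)%Z in let dL := (z / 64)%Z in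
  ((dL - 32)%Z, (dS - 32)%Z, (dM - 32)%Z, letter_of_code ca, letter_of_code cb,
   letter_of_code cc, letter_of_code cd).

Definition inX (X : PositiveSet.t) (s : astate) : bool :=
  PositiveSet.mem (encode s) X && (decode (encode s) == s).

Definition invariant (rg : regime) (X : PositiveSet.t) : bool :=
  PositiveSet.for_all (fun key => let s := decode key in
    [&& all (inX X) (successors rg s), overflow_ok rg s & balanced s]) X
  && inX X initial.

Lemma invariant_mem rg X s : invariant rg X -> inX X s ->
  [&& all (inX X) (successors rg s), overflow_ok rg s & balanced s].
Proof.
move=> /andP[hall _] /andP[/PositiveSet.mem_spec hs /eqP hdec].
move: hall; rewrite /is_true PositiveSet.for_all_spec => [/(_ _ hs)|]; first by rewrite hdec.
by move=> ? ? ->.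
Qed.

Lemma invariant_initial rg X : invariant rg X -> inX X initial.
Proof. by case/andP. Qed.

Lemma invariant_successor rg X s t :
  invariant rg X -> inX X s -> t \in successors rg s -> inX X t.
Proof. by move=> hX /(invariant_mem hX) /and3P[/allP hsucc _ _] /hsucc. Qed.

Definition visit (acc : PositiveSet.t * seq astate) (t : astate) :=
  let: (seen, fresh) := acc in
  if PositiveSet.mem (encode t) seen then acc
  else (PositiveSet.add (encode t) seen, t :: fresh).

Fixpoint explore (rg : regime) (fuel : nat) (todo : seq astate) (seen : PositiveSet.t) :=
  if fuel is fuel'.+1 then
    let: (seen', fresh) := foldl visit (seen, [::]) (flatten (map (successors rg) todo)) in
    if fresh is [::] then seen' else explore rg fuel' fresh seen'
  else seen.

Definition reachable (rg : regime) : PositiveSet.t :=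
  explore rg 100 [:: initial] (PositiveSet.singleton (encode initial)).

Lemma reachable_invariant rg : invariant rg (reachable rg).
Proof. by case: rg; vm_compute. Qed.

Section Induction.

Variable p : nat.
Variable rg : regime.
Hypothesis p_regime : in_regime rg p.
Variable u : nat -> letter.
Hypothesis u_fixed : is_fixed_point_limit p u.
Variable X : PositiveSet.t.
Hypothesis X_invariant : invariant rg X.

Let p_gt0 : 0 < p.
Proof. by case: rg p_regime => /=; lia. Qed.

Let k := parent p u.

Lemma slot_range_offset i : exists lo hi,
  slot_range (at_block_end p u i) (u (parent p u i)) = Some (lo, hi) /\
  (lf_eval lo (Z.of_nat p) <= Z.of_nat (offset p u i) <= lf_eval hi (Z.of_nat p))%Z.
Proof.
have := desubst_spec p_gt0 u i; rewrite /at_block_end /parent /offset.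
case: desubst => j r /= [_ hr]; rewrite /slot_range.
case: leqP => h.
  by do 2 eexists; split; [reflexivity | rewrite !lf_evalE lf_eval_block_form; lia].
case: (u j) hr h => hr h; [| by rewrite /= ltnS ltn0 in h |].
all: do 2 eexists; split; first reflexivity.
all: move: hr h; rewrite !lf_evalE lf_eval_block_form; cbn [block_len] => hr h; lia.
Qed.

Lemma abstraction_successor a b c d :
  (-5 <= ddiff Z.of_nat a b c d <= 5)%Z ->
  abstraction u a b c d \in
    successors rg (abstraction u (k a) (k b) (k c) (k d)).
Proof.
move=> hdd; rewrite mem_pmap; apply/mapP.
exists (at_block_end p u a, at_block_end p u b, (at_block_end p u c, at_block_end p u d),
        ddiff Z.of_nat a b c d); first exact: mem_moves.
rewrite /successor /abstraction.
have [loa [hia [-> ra]]] := slot_range_offset a.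
have [lob [hib [-> rb]]] := slot_range_offset b.
have [loc [hic [-> rc]]] := slot_range_offset c.
have [lod [hid [-> rd]]] := slot_range_offset d.
have [eL eS eM] := ddiff_counts_desubst p_gt0 u_fixed a b c d.
have eLen := ddiff_len_counts u a b c d.
rewrite (feasible_witness p_regime).
2,3: rewrite !lf_evalE /lf_eval /= in ra rb rc rd *;
  rewrite /ddiff /zoffset /k in eL eS eM eLen *; nia.
rewrite /slot_letter /k -!letter_desubst //; congr (Some (_, _, _, _, _, _, _)); lia.
Qed.

Lemma overflow_bound a b c d : inX X (abstraction u a b c d) ->
  (ddiff Z.of_nat a b c d = 5 ->
     Z.of_nat (block_len p (u a) + block_len p (u d)) + 3 <= ddiff (zstart p u) a b c d)%Z /\
  (ddiff Z.of_nat a b c d = -5 ->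
     ddiff (zstart p u) a b c d <= - 3 - Z.of_nat (block_len p (u b) + block_len p (u c)))%Z.
Proof.
move=> /(invariant_mem X_invariant) /and3P[_ hov _].
move: hov; rewrite /overflow_ok /abstraction ddiff_block_start -(ddiff_len_counts u).
move=> /andP[h5 hm5]; split=> hlen; rewrite hlen /= in h5 hm5.
- have := nonneg_onP p_regime h5; rewrite !lf_evalE !lf_eval_block_form /lf_eval; cbn [fst snd]; lia.
- have := nonneg_onP p_regime hm5; rewrite !lf_evalE !lf_eval_block_form /lf_eval; cbn [fst snd]; lia.
Qed.

Lemma parent_len_diff_le a b c d :
  (forall a' b' c' d', a' + b' + c' + d' <= k a + k b + k c + k d ->
     ddiff Z.of_nat a' b' c' d' = 5%Z -> inX X (abstraction u a' b' c' d')) ->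
  (ddiff Z.of_nat a b c d <= 5 -> ddiff Z.of_nat (k a) (k b) (k c) (k d) <= 5)%Z.
Proof.
move=> IH hlen; apply/Z.nlt_ge => hgt.
(* Move [k b] and [k c] to the left until the length difference drops to 5. *)
set e := Z.to_nat (ddiff Z.of_nat (k a) (k b) (k c) (k d) - 5).
set x := minn (k b) e; set y := e - x.
have hy : y <= k c by rewrite /y /x /e /ddiff in hgt *; lia.
have h5 : ddiff Z.of_nat (k a) (k b - x) (k c - y) (k d) = 5%Z.
  by rewrite /y /x /e /ddiff in hgt *; lia.
have [/(_ h5) hov _] := overflow_bound (IH (k a) (k b - x) (k c - y) (k d) ltac:(lia) h5).
have := ddiff_len_desubst p_gt0 u a b c d.
have := block_start_mono p_gt0 u (leq_subr x (k b)).
have := block_start_mono p_gt0 u (leq_subr y (k c)).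
have := offset_lt p_gt0 u a; have := offset_lt p_gt0 u d.
move: hov h5 hlen hgt; rewrite /y /x /e /zstart /zoffset /ddiff /k; lia.
Qed.

Lemma parent_len_diff_ge a b c d :
  (forall a' b' c' d', a' + b' + c' + d' <= k a + k b + k c + k d ->
     ddiff Z.of_nat a' b' c' d' = (-5)%Z -> inX X (abstraction u a' b' c' d')) ->
  (-5 <= ddiff Z.of_nat a b c d -> -5 <= ddiff Z.of_nat (k a) (k b) (k c) (k d))%Z.
Proof.
move=> IH hlen; apply/Z.nlt_ge => hlt.
(* Move [k a] and [k d] to the left until the length difference rises to -5. *)
set e := Z.to_nat (- ddiff Z.of_nat (k a) (k b) (k c) (k d) - 5).
set x := minn (k a) e; set y := e - x.
have hy : y <= k d by rewrite /y /x /e /ddiff in hlt *; lia.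
have h5 : ddiff Z.of_nat (k a - x) (k b) (k c) (k d - y) = (-5)%Z.
  by rewrite /y /x /e /ddiff in hlt *; lia.
have [_ /(_ h5) hov] := overflow_bound (IH (k a - x) (k b) (k c) (k d - y) ltac:(lia) h5).
have := ddiff_len_desubst p_gt0 u a b c d.
have := block_start_mono p_gt0 u (leq_subr x (k a)).
have := block_start_mono p_gt0 u (leq_subr y (k d)).
have := offset_lt p_gt0 u b; have := offset_lt p_gt0 u c.
move: hov h5 hlen hlt; rewrite /y /x /e /zstart /zoffset /ddiff /k; lia.
Qed.

Lemma abstraction_inX a b c d :
  (-5 <= ddiff Z.of_nat a b c d <= 5)%Z -> inX X (abstraction u a b c d).
Proof.
have base a' b' c' d' : a' + b' + c' + d' = 0 -> inX X (abstraction u a' b' c' d').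
  move=> h0; have [-> -> -> ->] : [/\ a' = 0, b' = 0, c' = 0 & d' = 0] by split; lia.
  by rewrite /abstraction (fixed_point_head u_fixed); exact: invariant_initial X_invariant.
move: {2}(a + b + c + d) (leqnn (a + b + c + d)) => N.
elim: N a b c d => [|N IH] a b c d hN hlen;
  case: (posnP (a + b + c + d)) => [/base //|hpos]; first lia.
have hk := parents_sum_lt p_gt0 u_fixed hpos.
have IHk a' b' c' d' : a' + b' + c' + d' <= k a + k b + k c + k d ->
    (-5 <= ddiff Z.of_nat a' b' c' d' <= 5)%Z -> inX X (abstraction u a' b' c' d').
  by move=> hs; apply: IH; rewrite /k in hs; lia.
have hpar : (-5 <= ddiff Z.of_nat (k a) (k b) (k c) (k d) <= 5)%Z.
  case: hlen => hlo hhi; split.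
  - by apply: (parent_len_diff_ge _ hlo) => a' b' c' d' hs he; apply: IHk; lia.
  - by apply: (parent_len_diff_le _ hhi) => a' b' c' d' hs he; apply: IHk; lia.
apply: invariant_successor X_invariant (IHk _ _ _ _ (leqnn _) hpar) _.
exact: abstraction_successor.
Qed.

End Induction.

Lemma occ_factor u a i n : occ a (factor u i n) + pcount u a i = pcount u a (i + n).
Proof.
rewrite /occ /factor; elim: n => [|n IH]; first by rewrite addn0.
by rewrite mkseqS -cats1 count_cat /= addnS /= -IH addn0 addnAC.
Qed.

Theorem theorem6p1 (p : nat) (u : nat -> letter) :
  1 < p -> is_fixed_point_limit p u ->
  forall (v w : seq letter) (i j : nat),
    v = factor u i (size v) -> w = factor u j (size w) ->
    size v = size w ->
    occ L v <= occ L w + 3 /\ occ L w <= occ L v + 3.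
Proof.
move=> p_gt1 u_fixed v w i j hv hw hsize.
set n := size v in hv hsize; rewrite -hsize in hw.
have hX := reachable_invariant (regime_of p).
have hlen : ddiff Z.of_nat i (i + n) j (j + n) = 0%Z by rewrite /ddiff; lia.
have hin := abstraction_inX (in_regime_of p_gt1) u_fixed hX (a := i) (b := i + n)
  (c := j) (d := j + n) ltac:(lia).
have /and3P[_ _] := invariant_mem hX hin.
rewrite /balanced /abstraction -ddiff_len_counts hlen /= => /andP[/Z.leb_le h1 /Z.leb_le h2].
have := occ_factor u L i n; have := occ_factor u L j n.
rewrite hv hw; move: h1 h2; rewrite /ddiff /zcount; lia.
Qed.
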